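(* Let $n\ge1$, $1\le M\le 2^{n-1}$, $a:=M/2^n$, and let $f:\{-1,1\}^n\to\{-1,1\}$ satisfy $|f^{-1}(1)|=M$. For every even $m$ with $2\le m\le n$, $\mathbf{W}_m\le 4a(1-a)$. For every odd $m$ with $3\le m\le n$, $\mathbf{W}_m\le 2a$.
   Context: For $f:\{-1,1\}^n\to\{-1,1\}$ and $S\subseteq[1:n]$, the Fourier coefficient is $\hat f_S:=\mathbb{E}_{\mathbf{x}\sim\mathrm{Unif}\{-1,1\}^n}[f(\mathbf{x})\prod_{i\in S}x_i]$, and the degree-$m$ Fourier weight is $\mathbf{W}_m:=\sum_{S:|S|=m}\hat f_S^{2}$. *)

From mathcomp Require Import all_boot all_order all_algebra.
Set Implicit Arguments. Unset Strict Implicit. Unset Printing Implicit Defensive.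
Import Order.TTheory GRing.Theory Num.Theory.
Local Open Scope ring_scope.

(* A point of {-1,1}^n is encoded as x : 'I_n -> bool, coordinate i being
   +1 if x i = true and -1 if x i = false. *)
Definition cube (n : nat) := {ffun 'I_n -> bool}.

Definition coord (n : nat) (x : cube n) (i : 'I_n) : rat :=
  if x i then 1 else -1.

Definition fourier (n : nat) (f : cube n -> rat) (S : {set 'I_n}) : rat :=
  (\sum_(x : cube n) f x * \prod_(i in S) coord x i) / (2 ^ n)%:R.

Definition weight (n : nat) (f : cube n -> rat) (m : nat) : rat :=
  \sum_(S : {set 'I_n} | #|S| == m) fourier f S ^+ 2.

(* Parseval gives sum_S \hat f_S^2 = E[f^2].  For Boolean f this total is 1 and
   \hat f_emptyset = 2a - 1, so every W_m with m > 0 is at most 1 - (2a-1)^2 = 4a(1-a).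
   For odd m, W_m only sees the odd part h(x) = (f(x) - f(-x))/2, whose Fourier
   coefficients of odd degree are those of f; hence W_m <= E[h^2].  Now h(x) vanishes
   unless f(x) = 1 or f(-x) = 1, and h(x)^2 <= 1, so E[h^2] <= 2 Pr[f = 1] = 2a. *)
From Pilot Require Import Defs.
From mathcomp Require Import all_boot all_order all_algebra.
From mathcomp Require Import ring lra.
Import Order.TTheory GRing.Theory Num.Theory.
Set Implicit Arguments. Unset Strict Implicit. Unset Printing Implicit Defensive.
Local Open Scope ring_scope.

Section FourierAnalysis.

Variable n : nat.
Implicit Types (x y : cube n) (S : {set 'I_n}) (g : cube n -> rat).

Definition character S x : rat := \prod_(i in S) Defs.coord x i.

Definition cube_opp x : cube n := [ffun i => ~~ x i].

Lemma card_cube : #|{: cube n}| = (2 ^ n)%N.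
Proof. by rewrite card_ffun card_bool card_ord. Qed.

Lemma cube_size_neq0 : (2 ^ n)%:R != 0 :> rat.
Proof. by rewrite pnatr_eq0 expn_eq0. Qed.

Lemma coord_mul_self x i : Defs.coord x i * Defs.coord x i = 1.
Proof. by rewrite /Defs.coord; case: (x i); rewrite ?mulrNN mulr1. Qed.

Lemma sum_character_mul x y :
  \sum_S character S x * character S y = if x == y then (2 ^ n)%:R else 0.
Proof.
transitivity (\prod_(i : 'I_n) (Defs.coord x i * Defs.coord y i + 1)).
  rewrite bigA_distr; apply: eq_bigr => S _.
  by rewrite /character -big_split /= big_mkcond.
case: eqP => [<- | /eqP neq_xy].
  under eq_bigr do rewrite coord_mul_self.
  by rewrite prodr_const card_ord natrX.
have [i neq_i] : exists i, x i != y i.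
  apply/existsP; apply: contraR neq_xy => /existsPn eq_xy.
  by apply/eqP/ffunP => i; apply/eqP; have := eq_xy i; rewrite negbK.
rewrite (bigD1 i) //= /Defs.coord.
by move: neq_i; case: (x i); case: (y i) => //= _; rewrite ?mulrN ?mulNr mulr1 addNr mul0r.
Qed.

Lemma parseval g :
  \sum_S fourier g S ^+ 2 = (\sum_x g x ^+ 2) / (2 ^ n)%:R.
Proof.
have N0 := cube_size_neq0; rewrite /fourier.
under eq_bigr => S _ do rewrite expr_div_n expr2 big_distrlr /=.
rewrite -mulr_suml exchange_big /=.
transitivity ((\sum_x \sum_y g x * g y * \sum_S character S x * character S y)
   / (2 ^ n)%:R ^+ 2).
  congr (_ / _); apply: eq_bigr => x _; rewrite exchange_big /=.
  apply: eq_bigr => y _; rewrite mulr_sumr; apply: eq_bigr => S _.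
  by rewrite /character; ring.
transitivity ((\sum_x g x ^+ 2 * (2 ^ n)%:R) / (2 ^ n)%:R ^+ 2).
  congr (_ / _); apply: eq_bigr => x _.
  rewrite (bigD1 x) //= sum_character_mul eqxx big1 ?addr0 ?expr2 // => y /negbTE.
  by rewrite sum_character_mul eq_sym => ->; rewrite mulr0.
by rewrite -mulr_suml [_ ^+ 2]expr2 invfM mulrA mulfK.
Qed.

Lemma weight_le_mean_sqr g m :
  weight g m <= (\sum_x g x ^+ 2) / (2 ^ n)%:R.
Proof.
rewrite -parseval [X in _ <= X](bigID (fun S => #|S| == m)) /= lerDl.
by apply: sumr_ge0 => S _; apply: sqr_ge0.
Qed.

Lemma weight_le_variance g m : m != 0%N ->
  weight g m <= (\sum_x g x ^+ 2) / (2 ^ n)%:R - fourier g set0 ^+ 2.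
Proof.
move=> m_neq0; rewrite -parseval (bigD1 set0) //= addrAC subrr add0r.
have -> : weight g m = \sum_(S | (S != set0) && (#|S| == m)) fourier g S ^+ 2.
  apply: eq_bigl => S; case: eqP => [card_S|]; last by rewrite andbF.
  by rewrite andbT -card_gt0 lt0n card_S.
rewrite [X in _ <= X](bigID (fun S => #|S| == m)) /= lerDl.
by apply: sumr_ge0 => S _; apply: sqr_ge0.
Qed.

Lemma cube_oppK : involutive cube_opp.
Proof. by move=> x; apply/ffunP => i; rewrite !ffunE negbK. Qed.

Lemma sum_cube_opp (F : cube n -> rat) : \sum_x F (cube_opp x) = \sum_x F x.
Proof.
rewrite (reindex_inj (inv_inj cube_oppK)) /=.
by apply: eq_bigr => x _; rewrite cube_oppK.
Qed.

Lemma character_opp S x :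
  character S (cube_opp x) = (-1) ^+ #|S| * character S x.
Proof.
rewrite /character -prodrN; apply: eq_bigr => i _.
by rewrite /Defs.coord ffunE; case: (x i); rewrite ?opprK.
Qed.

Definition odd_part g x : rat := (g x - g (cube_opp x)) / 2.

Lemma fourier_odd_part g S : odd #|S| -> fourier (odd_part g) S = fourier g S.
Proof.
move=> odd_S; rewrite /fourier; congr (_ / _).
have sum_opp : \sum_x g (cube_opp x) * character S x = - \sum_x g x * character S x.
  rewrite -sum_cube_opp -sumrN; apply: eq_bigr => x _.
  by rewrite cube_oppK character_opp -signr_odd odd_S mulN1r mulrN.
transitivity ((\sum_x g x * character S x - \sum_x g (cube_opp x) * character S x) / 2).
  by rewrite -sumrB mulr_suml; apply: eq_bigr => x _; rewrite /odd_part /character; ring.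
by rewrite sum_opp opprK /character; field.
Qed.

Lemma weight_odd_part g m : odd m -> weight (odd_part g) m = weight g m.
Proof. by move=> odd_m; apply: eq_bigr => S /eqP card_S; rewrite fourier_odd_part ?card_S. Qed.

Lemma sum_indicator g :
  \sum_x (g x == 1)%:R = #|[set x | g x == 1]|%:R :> rat.
Proof.
rewrite -sum1_card natr_sum [RHS]big_mkcond /=.
by apply: eq_bigr => x _; rewrite inE; case: (g x == 1).
Qed.

End FourierAnalysis.

Lemma sqr_half_diff_le_indicators (u v : rat) :
  (u = 1 \/ u = -1) -> (v = 1 \/ v = -1) ->
  ((u - v) / 2) ^+ 2 <= (u == 1)%:R + (v == 1)%:R.
Proof.
have neq_N1_1 : (-1 == 1 :> rat) = false by [].
by case=> ->; case=> ->; rewrite ?eqxx ?neq_N1_1 expr2 /=; lra.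
Qed.

Section BooleanFunctions.

Variables (n : nat) (g : cube n -> rat).
Hypothesis g_sign : forall x, g x = 1 \/ g x = -1.

Let ones := #|[set x | g x == 1]|%:R : rat.

Lemma boolean_sum_sqr : \sum_x g x ^+ 2 = (2 ^ n)%:R.
Proof.
under eq_bigr => x _ do (have [-> | ->] := g_sign x; rewrite ?sqrrN expr1n).
by rewrite sumr_const card_cube.
Qed.

Lemma boolean_fourier_set0 :
  fourier g set0 = 2 * (ones / (2 ^ n)%:R) - 1.
Proof.
have g_indicator x : g x = 2 * (g x == 1)%:R - 1.
  by have [-> | ->] := g_sign x; rewrite ?eqxx //; rewrite (_ : (-1 == 1 :> rat) = false).
rewrite /fourier; under eq_bigr => x _ do rewrite big_set0 mulr1 g_indicator.
rewrite sumrB -mulr_sumr sum_indicator sumr_const card_cube.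
by rewrite /ones; field; exact: cube_size_neq0.
Qed.

Lemma boolean_sum_sqr_odd_part_le : \sum_x odd_part g x ^+ 2 <= 2 * ones.
Proof.
apply: le_trans (_ : \sum_x ((g x == 1)%:R + (g (cube_opp x) == 1)%:R) <= _).
  by apply: ler_sum => x _; apply: sqr_half_diff_le_indicators.
rewrite big_split /= (sum_cube_opp (fun x => (g x == 1)%:R)) sum_indicator.
by rewrite /ones; lra.
Qed.

End BooleanFunctions.

Theorem theorem3 (n M : nat) (f : cube n -> rat) :
  (1 <= n)%N -> (1 <= M <= 2 ^ n.-1)%N ->
  (forall x, f x = 1 \/ f x = -1) ->
  #|[set x : cube n | f x == 1]| = M ->
  let a : rat := M%:R / (2 ^ n)%:R in
  (forall m : nat, ~~ odd m -> (2 <= m <= n)%N -> weight f m <= 4 * a * (1 - a)) /\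
  (forall m : nat, odd m -> (3 <= m <= n)%N -> weight f m <= 2 * a).
Proof.
move=> _ _ f_sign card_ones a; have N0 := cube_size_neq0 n.
split=> m m_parity /andP [m_ge _].
- have m_neq0 : m != 0%N by case: m m_ge {m_parity}.
  apply: (le_trans (weight_le_variance f m_neq0)).
  rewrite boolean_sum_sqr // boolean_fourier_set0 // card_ones -/a divff //.
  by nra.
- rewrite -weight_odd_part //; apply: le_trans (weight_le_mean_sqr _ _) _.
  rewrite /a mulrA ler_wpM2r ?invr_ge0 ?ler0n // -card_ones.
  exact: boolean_sum_sqr_odd_part_le.
Qed.
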